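(* Let $A\in\mathbb{R}^{n\times d}$ be any matrix and let $\alpha_t=t$ for $t\ge 1$. Consider the following two procedures. (Smooth Perceptron.) For $\mu>0$ and $\mathbf{v}\in\mathbb{R}^d$ let $\mathbf{q}_{\mu}(\mathbf{v})=\arg\min_{\mathbf{q}\in\Delta^n}\big[\mathbf{q}^{\top}A\mathbf{v}+\mu D_E(\mathbf{q},\tfrac{\mathbf{1}}{n})\big]$. Set $\theta_0=\tfrac23$, $\mu_0=4$, $\mathbf{v}_0=\tfrac{1}{n}A^{\top}\mathbf{1}$, $\mathbf{q}_0=\mathbf{q}_{\mu_0}(\mathbf{v}_0)$, and for $t=1,\dots,T-1$: $\mathbf{v}_t=(1-\theta_{t-1})(\mathbf{v}_{t-1}+\theta_{t-1}A^{\top}\mathbf{q}_{t-1})+\theta_{t-1}^2A^{\top}\mathbf{q}_{\mu_{t-1}}(\mathbf{v}_{t-1})$, $\mu_t=(1-\theta_{t-1})\mu_{t-1}$, $\mathbf{q}_t=(1-\theta_{t-1})\mathbf{q}_{t-1}+\theta_{t-1}\mathbf{q}_{\mu_t}(\mathbf{v}_t)$, $\theta_t=\tfrac{2}{t+3}$. (Game dynamics.) Let $g(\mathbf{w},\mathbf{p})=\mathbf{p}^{\top}A\mathbf{w}-\tfrac12\|\mathbf{w}\|_2^2$, $\mathbf{p}_0=\tfrac{\mathbf{1}}{n}$, and for $j\ge0$ let $h_j(\mathbf{w})=-g(\mathbf{w},\mathbf{p}_j)$ and $\ell_j(\mathbf{p})=g(\mathbf{w}_j,\mathbf{p})$. For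 $t=1,\dots,T$: $\mathbf{w}_t=\arg\min_{\mathbf{w}\in\mathbb{R}^d}\sum_{j=1}^{t-1}\alpha_jh_j(\mathbf{w})+\alpha_th_{t-1}(\mathbf{w})$, and then $\mathbf{p}_t=\arg\min_{\mathbf{p}\in\Delta^n}\tfrac14\sum_{s=1}^{t}\alpha_s\ell_s(\mathbf{p})+D_E(\mathbf{p},\tfrac{\mathbf{1}}{n})$. Let $\overline{\mathbf{w}}_T=\frac{\sum_{t=1}^T\alpha_t\mathbf{w}_t}{\sum_{t=1}^T\alpha_t}$. Then $\mathbf{v}_{T-1}=\overline{\mathbf{w}}_T$ and $\mathbf{q}_{T-1}=\frac{\sum_{t=1}^{T}\alpha_t\mathbf{p}_t}{\sum_{t=1}^{T}\alpha_t}$.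
   Context: $\Delta^n$ is the probability simplex in $\mathbb{R}^n$, $\mathbf{1}$ is the all-ones vector. $E(\mathbf{p})=\sum_i p_i\log p_i$ is the negative entropy and $D_E(\mathbf{p},\mathbf{q})=\sum_i p_i\log(p_i/q_i)$ its Bregman divergence on $\Delta^n$ (the KL divergence). *)

From HB Require Import structures.
From mathcomp Require Import all_boot all_order all_algebra.
From mathcomp Require Import all_classical all_reals all_analysis.
Set Implicit Arguments. Unset Strict Implicit. Unset Printing Implicit Defensive.
Import Order.TTheory GRing.Theory Num.Theory.
Local Open Scope ring_scope.

Section Defs.
Variable R : realType.

Definition simplex (n : nat) : set 'cV[R]_n :=
  fun q => (forall i, 0 <= q i ord0) /\ \sum_i q i ord0 = 1.

Definition unif (n : nat) : 'cV[R]_n := const_mx (n%:R^-1).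

(* KL divergence D_E(p,q) = sum_i p_i log(p_i/q_i)  (0 log 0 = 0 since ln 0 = 0) *)
Definition KL (n : nat) (p q : 'cV[R]_n) : R :=
  \sum_i p i ord0 * ln (p i ord0 / q i ord0).

Definition is_argmin (T : Type) (S : set T) (f : T -> R) (x : T) : Prop :=
  S x /\ forall y, S y -> f x <= f y.

Definition bil (n d : nat) (A : 'M[R]_(n, d)) (p : 'cV[R]_n) (w : 'cV[R]_d) : R :=
  (p^T *m A *m w) ord0 ord0.

Definition gpay (n d : nat) (A : 'M[R]_(n, d)) (w : 'cV[R]_d) (p : 'cV[R]_n) : R :=
  bil A p w - 2^-1 * \sum_i (w i ord0) ^+ 2.

Definition alpha (t : nat) : R := t%:R.
End Defs.

(* With alpha_t = t the cumulative weights are A_t = t(t+1)/2 and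
   theta_k = alpha_{k+2} / A_{k+2}, so each (1 - theta_k, theta_k) combination in
   the Smooth Perceptron is one step of an alpha-weighted running average.
   The w-player minimizes a strictly convex quadratic, so w_t is A^T applied to the
   optimistic weighted sum of the p's, divided by A_t.  The p-player's response and
   the smoothed best response q_mu both minimize a linear term plus KL over the
   simplex, and that minimizer is unique by strict convexity of x ln x.  Induction
   on k then gives v_k = wbar_{k+1}, q_k = pbar_{k+1} and mu_k = 4 / A_{k+1}: at these
   values q_mu(v_k) is the response p_{k+1}, and the v-update is the running average
   of v_k with w_{k+2}. *)

From HB Require Import structures.
From mathcomp Require Import all_boot all_order all_algebra.
From mathcomp Require Import all_classical all_reals all_analysis.
From mathcomp Require Import ring lra zify.
Import Order.TTheory GRing.Theory Num.Theory.
Set Implicit Arguments. Unset Strict Implicit. Unset Printing Implicit Defensive.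
Local Open Scope ring_scope.

Section Entropy.
Variable R : realType.

Lemma ln_lt_subr1 (x : R) : 0 < x -> x != 1 -> ln x < x - 1.
Proof.
move=> x_gt0 x_neq1.
have := expR_gt1Dx (x := ln x); rewrite ln_eq0 // lnK ?posrE //.
by move/(_ x_neq1); lra.
Qed.

Lemma xlnx_tangent_lt (u a m : R) : 0 < u -> 0 <= a -> 0 < m -> a != m ->
  a * ln (m / u) + (a - m) < a * ln (a / u).
Proof.
move=> u_gt0 a_ge0 m_gt0 a_neq_m.
have [->|a_neq0] := eqVneq a 0; first by rewrite !mul0r !add0r oppr_lt0.
have a_gt0 : 0 < a by rewrite lt_def a_neq0.
have ma_neq1 : m / a != 1.
  by apply: contra a_neq_m => /eqP ma1; rewrite -[m](divfK a_neq0) ma1 mul1r.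
have := ln_lt_subr1 (divr_gt0 m_gt0 a_gt0) ma_neq1.
rewrite !ln_div ?posrE // -(ltr_pM2l a_gt0) => lt_ln.
have am : a * (m / a - 1) = m - a by field.
by rewrite am in lt_ln; lra.
Qed.

Lemma xlnx_midpoint_lt (u a b : R) : 0 < u -> 0 <= a -> 0 <= b -> a != b ->
  2 * ((a + b) / 2 * ln ((a + b) / 2 / u)) < a * ln (a / u) + b * ln (b / u).
Proof.
move=> u_gt0 a_ge0 b_ge0 a_neq_b.
have mid_gt0 : 0 < (a + b) / 2.
  apply: divr_gt0 => //; rewrite lt_def addr_ge0 // andbT.
  by apply: contra a_neq_b; rewrite paddr_eq0 // => /andP[/eqP-> /eqP->].
have a_neq_mid : a != (a + b) / 2 by apply: contra a_neq_b => /eqP ?; apply/eqP; lra.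
have b_neq_mid : b != (a + b) / 2 by apply: contra a_neq_b => /eqP ?; apply/eqP; lra.
have := xlnx_tangent_lt u_gt0 a_ge0 mid_gt0 a_neq_mid.
have := xlnx_tangent_lt u_gt0 b_ge0 mid_gt0 b_neq_mid.
set L := ln _; lra.
Qed.

Lemma xlnx_midpoint_le (u a b : R) : 0 < u -> 0 <= a -> 0 <= b ->
  2 * ((a + b) / 2 * ln ((a + b) / 2 / u)) <= a * ln (a / u) + b * ln (b / u).
Proof.
move=> u_gt0 a_ge0 b_ge0; have [<-|a_neq_b] := eqVneq a b.
  have -> : (a + a) / 2 = a by field.
  lra.
exact/ltW/xlnx_midpoint_lt.
Qed.

Lemma KL_midpoint_lt n (u y1 y2 : 'cV[R]_n) : (forall i, 0 < u i 0) ->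
  (forall i, 0 <= y1 i 0) -> (forall i, 0 <= y2 i 0) -> y1 != y2 ->
  2 * KL (2^-1 *: (y1 + y2)) u < KL y1 u + KL y2 u.
Proof.
move=> u_gt0 y1_ge0 y2_ge0 y12.
have [i y12_i] : exists i, y1 i 0 != y2 i 0.
  apply/existsP; apply: contraR y12 => /existsPn y12.
  by apply/eqP/matrixP => i j; rewrite ord1; apply/eqP/negPn/y12.
have midE k : (2^-1 *: (y1 + y2)) k 0 = (y1 k 0 + y2 k 0) / 2 by rewrite !mxE mulrC.
rewrite /KL mulr_sumr -big_split /= (bigD1 i) //= [ltRHS](bigD1 i) //=.
apply: ltr_leD; first by rewrite midE xlnx_midpoint_lt.
by apply: ler_sum => k _; rewrite midE xlnx_midpoint_le.
Qed.
End Entropy.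

Section Argmin.
Variable R : realType.

Lemma is_argmin_affine (U : Type) (S : set U) (f g : U -> R) (a c : R) y : 0 < a ->
  (forall z, S z -> f z = a * g z + c) -> is_argmin S f y -> is_argmin S g y.
Proof.
move=> a_gt0 fE [Sy y_min]; split=> // z Sz.
by have := y_min z Sz; rewrite !fE // lerD2r ler_pM2l.
Qed.

Lemma is_argmin_midpoint_uniq (V : lmodType R) (S : set V) (f : V -> R) y1 y2 :
  (forall z1 z2, S z1 -> S z2 -> S (2^-1 *: (z1 + z2))) ->
  (forall z1 z2, S z1 -> S z2 -> z1 != z2 -> 2 * f (2^-1 *: (z1 + z2)) < f z1 + f z2) ->
  is_argmin S f y1 -> is_argmin S f y2 -> y1 = y2.
Proof.
move=> S_mid f_mid [Sy1 y1_min] [Sy2 y2_min]; apply/eqP/negP => /negP y12.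
have := f_mid _ _ Sy1 Sy2 y12.
have := y1_min _ (S_mid _ _ Sy1 Sy2); have := y2_min _ (S_mid _ _ Sy1 Sy2); lra.
Qed.

Lemma is_argmin_quadratic d (c : 'cV[R]_d) (s : R) (f : 'cV[R]_d -> R) y : 0 < s ->
  (forall x, f x = - \sum_i c i 0 * x i 0 + s * (2^-1 * \sum_i x i 0 ^+ 2)) ->
  is_argmin setT f y -> y = s^-1 *: c.
Proof.
move=> s_gt0 fE [_ y_min].
set z := s^-1 *: c.
have gap : f y - f z = \sum_i s / 2 * (y i 0 - z i 0) ^+ 2.
  rewrite !fE !mulr_sumr -!sumrN -!big_split /= -sumrB.
  by apply: eq_bigr => i _; rewrite /z mxE; field; rewrite gt_eqF.
have gap_ge0 i : 0 <= s / 2 * (y i 0 - z i 0) ^+ 2 by rewrite mulr_ge0 ?sqr_ge0 ?divr_ge0 ?ltW.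
have /eqP : \sum_i s / 2 * (y i 0 - z i 0) ^+ 2 = 0.
  by apply/eqP; rewrite eq_le sumr_ge0 // andbT -gap subr_le0 y_min.
rewrite psumr_eq0 // => /allP yz; apply/matrixP => i j; rewrite (ord1 j).
move: (yz i (mem_index_enum _)).
by rewrite !mulf_eq0 invr_eq0 pnatr_eq0 (gt_eqF s_gt0) /= orbb subr_eq0 => /eqP.
Qed.
End Argmin.

Section Bil.
Variables (R : realType) (n d : nat) (A : 'M[R]_(n, d)).
Implicit Types (y : 'cV[R]_n) (x : 'cV[R]_d).

Lemma bil_trE y x : bil A y x = \sum_j (A^T *m y) j 0 * x j 0.
Proof.
rewrite /bil -[A]trmxK -trmx_mul trmxK mxE.
by apply: eq_bigr => j _; rewrite mxE.
Qed.

Lemma bil_addl y1 y2 x : bil A (y1 + y2) x = bil A y1 x + bil A y2 x.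
Proof. by rewrite /bil linearD /= !mulmxDl mxE. Qed.

Lemma bil_scalel a y x : bil A (a *: y) x = a * bil A y x.
Proof. by rewrite /bil linearZ /= -!scalemxAl mxE. Qed.

Lemma bil_scaler a y x : bil A y (a *: x) = a * bil A y x.
Proof. by rewrite /bil -scalemxAr mxE. Qed.

Lemma bil_suml I (r : seq I) (P : pred I) (F : I -> 'cV[R]_n) x :
  bil A (\sum_(i <- r | P i) F i) x = \sum_(i <- r | P i) bil A (F i) x.
Proof. by rewrite /bil linear_sum /= !mulmx_suml summxE. Qed.

Lemma bil_sumr I (r : seq I) (P : pred I) (F : I -> 'cV[R]_d) y :
  bil A y (\sum_(i <- r | P i) F i) = \sum_(i <- r | P i) bil A y (F i).
Proof. by rewrite /bil mulmx_sumr summxE. Qed.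
End Bil.

Section EntropicArgmin.
Variable R : realType.

Lemma simplex_midpoint n (y1 y2 : 'cV[R]_n) :
  simplex y1 -> simplex y2 -> simplex (2^-1 *: (y1 + y2)).
Proof.
move=> [y1_ge0 y1_sum] [y2_ge0 y2_sum]; split=> [i|].
  by rewrite !mxE mulr_ge0 ?addr_ge0.
under eq_bigr do rewrite !mxE.
by rewrite -mulr_sumr big_split /= y1_sum y2_sum; field.
Qed.

Lemma entropic_argmin_uniq n d (A : 'M[R]_(n, d)) (u : 'cV[R]_n) x y1 y2 :
  (forall i, 0 < u i 0) ->
  is_argmin (@simplex R n) (fun y => bil A y x + KL y u) y1 ->
  is_argmin (@simplex R n) (fun y => bil A y x + KL y u) y2 -> y1 = y2.
Proof.
move=> u_gt0; apply: is_argmin_midpoint_uniq; first exact: simplex_midpoint.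
move=> z1 z2 [z1_ge0 _] [z2_ge0 _] z12.
have := KL_midpoint_lt u_gt0 z1_ge0 z2_ge0 z12.
rewrite bil_scalel bil_addl; lra.
Qed.
End EntropicArgmin.

Section Weights.
Context {R : realType}.

Definition cum_alpha (t : nat) : R := \sum_(1 <= s < t.+1) @alpha R s.

Definition wsum (V : lmodType R) (x : nat -> V) (t : nat) : V :=
  \sum_(1 <= s < t.+1) @alpha R s *: x s.

Definition wavg (V : lmodType R) (x : nat -> V) (t : nat) : V :=
  (cum_alpha t)^-1 *: wsum x t.

Lemma cum_alphaS t : cum_alpha t.+1 = cum_alpha t + @alpha R t.+1.
Proof. by rewrite /cum_alpha big_nat_recr. Qed.

Lemma cum_alphaE t : cum_alpha t = t%:R * (t%:R + 1) / 2.
Proof.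
elim: t => [|t IHt]; first by rewrite /cum_alpha big_geq // !mul0r.
by rewrite cum_alphaS IHt /alpha -natr1; field.
Qed.

Lemma cum_alpha_gt0 t : 0 < cum_alpha t.+1.
Proof. by rewrite cum_alphaE divr_gt0 // mulr_gt0 // ltr_wpDl // ler0n. Qed.

Lemma wsumS (V : lmodType R) (x : nat -> V) t :
  wsum x t.+1 = wsum x t + @alpha R t.+1 *: x t.+1.
Proof. by rewrite /wsum big_nat_recr. Qed.

Lemma wsum0 (V : lmodType R) (x : nat -> V) : wsum x 0 = 0.
Proof. by rewrite /wsum big_geq. Qed.

Lemma cum_alpha1 : cum_alpha 1 = 1.
Proof. by rewrite /cum_alpha big_nat1. Qed.

Lemma wavg1 (V : lmodType R) (x : nat -> V) : wavg x 1 = x 1%N.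
Proof. by rewrite /wavg cum_alpha1 /wsum big_nat1 /alpha invr1 !scale1r. Qed.

Lemma step_weightE k : 2 / (k%:R + 3) = @alpha R k.+2 / cum_alpha k.+2 :> R.
Proof.
have k_ge0 : 0 <= k%:R :> R by apply: ler0n.
rewrite cum_alphaE /alpha -addn2 natrD; field.
by apply/andP; split; apply/lt0r_neq0; lra.
Qed.

Lemma step_weight_complE k : 1 - 2 / (k%:R + 3) = cum_alpha k.+1 / cum_alpha k.+2 :> R.
Proof.
have S2_neq0 := lt0r_neq0 (@cum_alpha_gt0 k.+1).
rewrite step_weightE -[1](divff S2_neq0) -mulrBl.
by rewrite [in X in (X - _) / _]cum_alphaS addrK.
Qed.

Lemma wavg_step (V : lmodType R) k (X x : V) :
  (1 - 2 / (k%:R + 3)) *: ((cum_alpha k.+1)^-1 *: X) + 2 / (k%:R + 3) *: x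
  = (cum_alpha k.+2)^-1 *: (X + @alpha R k.+2 *: x).
Proof.
have S1_neq0 := lt0r_neq0 (@cum_alpha_gt0 k).
rewrite step_weight_complE step_weightE scalerA scalerDr scalerA.
by rewrite mulrAC divff // mul1r [_ / _]mulrC.
Qed.

(* Regrouped this way, the inner combination is the optimistic iterate of the game. *)
Lemma momentum_regroup (V : lmodType R) (t : R) (a b c : V) :
  (1 - t) *: (a + t *: b) + t ^+ 2 *: c = (1 - t) *: a + t *: ((1 - t) *: b + t *: c).
Proof. by rewrite !scalerDr !scalerA -addrA expr2 [t * (1 - t)]mulrC. Qed.
End Weights.

Section Dynamics.
Variables (R : realType) (n d : nat) (A : 'M[R]_(n, d)) (T : nat).
Variables (w : nat -> 'cV[R]_d) (p : nat -> 'cV[R]_n).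
Hypothesis n_gt0 : (0 < n)%N.
Hypothesis game : forall t : nat, (1 <= t <= T)%N ->
  is_argmin [set: 'cV[R]_d]
    (fun x => \sum_(1 <= j < t) @alpha R j * (- gpay A x (p j))
              + @alpha R t * (- gpay A x (p t.-1))) (w t)
  /\ is_argmin (@simplex R n)
    (fun y => 4^-1 * (\sum_(1 <= s < t.+1) @alpha R s * gpay A (w s) y)
              + KL y (@unif R n)) (p t).

Lemma unif_gt0 i : 0 < @unif R n i 0.
Proof. by rewrite mxE invr_gt0 ltr0n. Qed.

Lemma game_wE t : (1 <= t <= T)%N ->
  w t = (cum_alpha t)^-1 *: (A^T *m (wsum p t.-1 + @alpha R t *: p t.-1)).
Proof.
case: t => [//|t] /andP[_ tT]; have [w_argmin _] := @game t.+1 tT.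
apply: is_argmin_quadratic (cum_alpha_gt0 t) _ w_argmin => x /=.
rewrite -bil_trE bil_addl bil_suml bil_scalel cum_alphaS /gpay /cum_alpha.
under [X in _ = - (X + _) + _]eq_bigr do rewrite bil_scalel.
set sq := 2^-1 * _; rewrite mulrDl mulr_suml [in RHS]opprD addrACA -sumrN -big_split /=.
by congr (_ + _); [apply: eq_bigr => j _ |]; ring.
Qed.

Lemma game_p_argmin t : (1 <= t <= T)%N ->
  is_argmin (@simplex R n) (fun y => bil A y (4^-1 *: wsum w t) + KL y (@unif R n)) (p t).
Proof.
move=> tT; have [_ p_argmin] := game tT.
pose c := - (4^-1 * \sum_(1 <= s < t.+1) @alpha R s * (2^-1 * \sum_i w s i 0 ^+ 2)).
apply: (is_argmin_affine (a := 1) (c := c)) p_argmin => // y _.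
rewrite mul1r bil_scaler bil_sumr /gpay /c.
under eq_bigr do rewrite mulrBr.
under [X in _ = _ * X + _ + _]eq_bigr do rewrite bil_scaler.
by rewrite sumrB; ring.
Qed.

Variables (qmu : R -> 'cV[R]_d -> 'cV[R]_n) (v : nat -> 'cV[R]_d) (mu : nat -> R)
  (q : nat -> 'cV[R]_n) (theta : nat -> R).
Hypothesis qmu_argmin : forall (m : R) (x : 'cV[R]_d), 0 < m ->
  is_argmin (@simplex R n) (fun y => bil A y x + m * KL y (@unif R n)) (qmu m x).
Hypotheses (theta0 : theta 0%N = 2 / 3) (mu0 : mu 0%N = 4).
Hypothesis v0 : v 0%N = n%:R^-1 *: (A^T *m const_mx 1).
Hypothesis q0 : q 0%N = qmu (mu 0%N) (v 0%N).
Hypothesis perceptron : forall t : nat, (1 <= t <= T.-1)%N ->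
  [/\ v t = (1 - theta t.-1) *: (v t.-1 + theta t.-1 *: (A^T *m q t.-1))
            + theta t.-1 ^+ 2 *: (A^T *m qmu (mu t.-1) (v t.-1)),
      mu t = (1 - theta t.-1) * mu t.-1,
      q t = (1 - theta t.-1) *: q t.-1 + theta t.-1 *: qmu (mu t) (v t)
    & theta t = 2 / (t%:R + 3)].
Hypothesis p0 : p 0%N = @unif R n.

Lemma qmu_argmin_scaled m x : 0 < m ->
  is_argmin (@simplex R n) (fun y => bil A y (m^-1 *: x) + KL y (@unif R n)) (qmu m x).
Proof.
move=> m_gt0; apply: (is_argmin_affine (a := m) (c := 0)) (qmu_argmin x m_gt0) => // y _.
by rewrite bil_scaler addr0 mulrDr mulrA divff ?mul1r // gt_eqF.
Qed.

Lemma qmu_eq_p k : (k < T)%N -> v k = wavg w k.+1 -> mu k = 4 / cum_alpha k.+1 ->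
  qmu (mu k) (v k) = p k.+1.
Proof.
move=> kT vk muk; have S_neq0 : cum_alpha k.+1 != 0 :> R := lt0r_neq0 (cum_alpha_gt0 k).
have mu_gt0 : 0 < mu k by rewrite muk divr_gt0 ?cum_alpha_gt0.
have := qmu_argmin_scaled (v k) mu_gt0.
have -> : (mu k)^-1 *: v k = 4^-1 *: wsum w k.+1.
  by rewrite vk muk /wavg scalerA invf_div mulrAC divff ?mul1r.
move/entropic_argmin_uniq; apply; first exact: unif_gt0.
exact: (@game_p_argmin k.+1).
Qed.

Lemma thetaE k : (k < T)%N -> theta k = 2 / (k%:R + 3).
Proof.
case: k => [_|k kT]; first by rewrite theta0 add0r.
by have [_ _ _ ->] := @perceptron k.+1 ltac:(lia).
Qed.

Let perceptron_eq_avg k :=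
  [/\ v k = wavg w k.+1, q k = wavg p k.+1 & mu k = 4 / cum_alpha k.+1].

Lemma perceptron_eq_avg0 : (0 < T)%N -> perceptron_eq_avg 0.
Proof.
move=> T_gt0; have w1 : w 1%N = A^T *m @unif R n.
  by rewrite (@game_wE 1) // wsum0 add0r cum_alpha1 /alpha invr1 !scale1r p0.
have v0E : v 0%N = wavg w 1.
  rewrite v0 wavg1 w1 scalemxAr; congr (_ *m _).
  by apply/matrixP => i j; rewrite !mxE mulr1.
have mu0E : mu 0%N = 4 / cum_alpha 1 by rewrite mu0 cum_alpha1 divr1.
by split=> //; rewrite q0 (qmu_eq_p T_gt0 v0E mu0E) wavg1.
Qed.

Lemma perceptron_eq_avgS k :
  (k.+1 < T)%N -> perceptron_eq_avg k -> perceptron_eq_avg k.+1.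
Proof.
move=> kT [vk qk muk].
have [v_upd mu_upd q_upd _] := @perceptron k.+1 ltac:(lia).
have thk := thetaE (ltnW kT); rewrite /= thk in v_upd mu_upd q_upd.
have mu_k1 : mu k.+1 = 4 / cum_alpha k.+2.
  rewrite mu_upd step_weight_complE muk mulrC mulrA divfK //.
  exact: lt0r_neq0 (cum_alpha_gt0 k).
have w_k2 : (1 - 2 / (k%:R + 3)) *: (A^T *m q k) + 2 / (k%:R + 3) *: (A^T *m p k.+1)
    = w k.+2.
  rewrite !scalemxAr -mulmxDr qk /wavg wavg_step (@game_wE k.+2) -?scalemxAr //.
have v_k1 : v k.+1 = wavg w k.+2.
  rewrite v_upd (qmu_eq_p (ltnW kT) vk muk) momentum_regroup w_k2 vk /wavg.
  by rewrite wavg_step -wsumS.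
split=> //.
by rewrite q_upd (qmu_eq_p kT v_k1 mu_k1) qk /wavg wavg_step -wsumS.
Qed.

Lemma perceptron_eq_avg_lt k : (k < T)%N -> perceptron_eq_avg k.
Proof.
elim: k => [|k IHk] kT; first exact: perceptron_eq_avg0.
exact/perceptron_eq_avgS/IHk/ltnW.
Qed.
End Dynamics.

Theorem proposition1 (R : realType) (n d : nat) (A : 'M[R]_(n, d)) (T : nat)
  (* smoothed best response q_mu(v) *)
  (qmu : R -> 'cV[R]_d -> 'cV[R]_n)
  (* Smooth Perceptron iterates *)
  (v : nat -> 'cV[R]_d) (mu : nat -> R) (q : nat -> 'cV[R]_n) (theta : nat -> R)
  (* game dynamics iterates *)
  (w : nat -> 'cV[R]_d) (p : nat -> 'cV[R]_n) :
  (0 < n)%N -> (1 <= T)%N ->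
  (forall (m : R) (x : 'cV[R]_d), 0 < m ->
     is_argmin (@simplex R n)
       (fun y => bil A y x + m * KL y (@unif R n)) (qmu m x)) ->
  theta 0%N = 2 / 3 -> mu 0%N = 4 ->
  v 0%N = n%:R^-1 *: (A^T *m const_mx 1) ->
  q 0%N = qmu (mu 0%N) (v 0%N) ->
  (forall t : nat, (1 <= t <= T.-1)%N ->
     [/\ v t = (1 - theta t.-1) *: (v t.-1 + theta t.-1 *: (A^T *m q t.-1))
               + theta t.-1 ^+ 2 *: (A^T *m qmu (mu t.-1) (v t.-1)),
         mu t = (1 - theta t.-1) * mu t.-1,
         q t = (1 - theta t.-1) *: q t.-1 + theta t.-1 *: qmu (mu t) (v t)
       & theta t = 2 / (t%:R + 3)]) ->
  p 0%N = @unif R n ->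
  (forall t : nat, (1 <= t <= T)%N ->
     is_argmin [set: 'cV[R]_d]
       (fun x => \sum_(1 <= j < t) @alpha R j * (- gpay A x (p j))
                 + @alpha R t * (- gpay A x (p t.-1))) (w t)
     /\ is_argmin (@simplex R n)
       (fun y => 4^-1 * (\sum_(1 <= s < t.+1) @alpha R s * gpay A (w s) y)
                 + KL y (@unif R n)) (p t)) ->
  v T.-1 = (\sum_(1 <= t < T.+1) @alpha R t)^-1 *: \sum_(1 <= t < T.+1) @alpha R t *: w t
  /\ q T.-1 = (\sum_(1 <= t < T.+1) @alpha R t)^-1 *: \sum_(1 <= t < T.+1) @alpha R t *: p t.
Proof.
move=> n_gt0 T_gt0 qmu_argmin theta0 mu0 v0 q0 perceptron p0 game.
have T1_lt_T : (T.-1 < T)%N by rewrite ltn_predL.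
have [vE qE _] :=
  perceptron_eq_avg_lt n_gt0 game qmu_argmin theta0 mu0 v0 q0 perceptron p0 T1_lt_T.
by rewrite prednK in vE qE.
Qed.
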